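(* Let $(G,M,I)$ be a finite formal context and, for each $k\ge0$, let $\mathcal F_k$ be the cosheaf on $D(G,M,I)$ with $\mathcal F_k(\sigma)=C_k(\Delta[\sigma'])$ and extension maps induced by the inclusions $\tau'\subseteq\sigma'$ for $\sigma\subseteq\tau$. The simplicial boundary maps $C_k(\Delta[\sigma'])\to C_{k-1}(\Delta[\sigma'])$ commute with the extension maps and hence induce maps $H_0(\mathcal F_k)\to H_0(\mathcal F_{k-1})$ on zeroth cellular cosheaf homology. The resulting chain complex $(H_0(\mathcal F_k))_{k\ge0}$ is isomorphic to the real simplicial chain complex $C^\Delta(D(M,G,I^T))$ of the dual Dowker complex.
   Context: A formal context is a triple $(G,M,I)$ with $I\subseteq G\times M$; for $A\subseteq G$, $A'=\{m: gIm\ \forall g\in A\}$, for $B\subseteq M$, $B'=\{g: gIm\ \forall m\in B\}$. The Dowker complex $D(G,M,I)$ is the abstract simplicial complex on $G$ whose simplices are the nonempty $\sigma\subseteq G$ with $\sigma'\ne\emptyset$; dually $D(M,G,I^T)$ is the abstract simplicial complex on $M$ whose simplices are the nonempty $S\subseteq M$ with $S'\neq\emptyset$. $C^\Delta$ and $C_k$ denote real (oriented) simplicial chains, with orientations from fixed linear orders on $G$ and $M$; $\Delta[S]$ is the full simplex on $S$. For a cosheaf $\mathcal F$ of real vector spaces on $D(G,M,I)$, cellular cosheaf homology is the homology of $C_j=\bigoplus_{\dim\tau=j}\mathcal F(\tau)$ with $\partial_j x=\sum_{i=0}^{j}(-1)^i\mathcal F(\tau_i\subseteq\tau)(x)$ for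 $x\in\mathcal F(\tau)$, $\tau=\{g_0<\dots<g_j\}$, $\tau_i=\tau\setminus\{g_i\}$; in particular $H_0(\mathcal F)=C_0/\partial_1(C_1)$. *)

From HB Require Import structures.
From mathcomp Require Import all_boot all_order all_algebra.
From mathcomp Require Import reals.
Set Implicit Arguments. Unset Strict Implicit. Unset Printing Implicit Defensive.
Import Order.TTheory GRing.Theory Num.Theory.
Local Open Scope ring_scope.

(* A finite formal context (G,M,I) with G = 'I_n, M = 'I_m (linearly ordered
   by the natural order of ordinals); I g x means g I x. *)

Definition intent (n m : nat) (I : 'I_n -> 'I_m -> bool) (A : {set 'I_n})
  : {set 'I_m} := [set x | [forall g in A, I g x]].
Definition extent (n m : nat) (I : 'I_n -> 'I_m -> bool) (B : {set 'I_m})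
  : {set 'I_n} := [set g | [forall x in B, I g x]].

(* Orientation sign (-1)^i where i is the position of x in the ordered
   simplex tau (x \in tau). *)
Definition osign (R : pzRingType) (p : nat) (tau : {set 'I_p}) (x : 'I_p) : R :=
  (-1) ^+ #|[set h in tau | (val h < val x)%N]|.

(* A vector of C_j(F_k) = ⊕_{dim sigma = j} C_k(Δ[sigma']) is encoded as a
   function on pairs (sigma, s), s a k-simplex of Δ[sigma'], i.e. the
   coefficient of the basis element e_sigma ⊗ s. *)
Definition coshChain (R : pzRingType) (n m : nat) (I : 'I_n -> 'I_m -> bool)
  (j k : nat) (f : {ffun {set 'I_n} * {set 'I_m} -> R}) : Prop :=
  forall p, f p != 0 ->
    [/\ #|p.1| = j.+1, intent I p.1 != set0,
        p.2 \subset intent I p.1 & #|p.2| = k.+1].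

(* Cellular cosheaf boundary C_j(F_k) -> C_{j-1}(F_k) (used for j = 1):
   d(e_tau ⊗ s) = sum_i (-1)^i e_{tau_i} ⊗ F(tau_i ⊆ tau)(s), where the
   extension map is induced by the inclusion tau' ⊆ tau_i', hence sends the
   simplex s to itself. *)
Definition coshBd (R : pzRingType) (n m : nat)
  (f : {ffun {set 'I_n} * {set 'I_m} -> R}) : {ffun {set 'I_n} * {set 'I_m} -> R} :=
  [ffun p => if p.1 != set0 then
     \sum_(g | g \notin p.1) osign R (g |: p.1) g * f (g |: p.1, p.2)
   else 0].

(* The map C_0(F_k) -> C_0(F_{k-1}) given on each summand C_k(Δ[sigma'])
   by the simplicial boundary (with C_{-1} = 0), in coordinates. *)
Definition fibreBd (R : pzRingType) (n m : nat)
  (f : {ffun {set 'I_n} * {set 'I_m} -> R}) : {ffun {set 'I_n} * {set 'I_m} -> R} :=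
  [ffun p => if p.2 != set0 then
     \sum_(x | x \notin p.2) osign R (x |: p.2) x * f (p.1, x |: p.2)
   else 0].

(* C_k(D(M,G,I^T)): functions on subsets S of M supported on k-simplices,
   i.e. #|S| = k+1 and S' nonempty. *)
Definition dualChain (R : pzRingType) (n m : nat) (I : 'I_n -> 'I_m -> bool)
  (k : nat) (h : {ffun {set 'I_m} -> R}) : Prop :=
  forall s, h s != 0 -> #|s| = k.+1 /\ extent I s != set0.

Definition simpBd (R : pzRingType) (m : nat) (h : {ffun {set 'I_m} -> R})
  : {ffun {set 'I_m} -> R} :=
  [ffun s => if s != set0 then
     \sum_(x | x \notin s) osign R (x |: s) x * h (x |: s)
   else 0].

From HB Require Import structures.
From mathcomp Require Import all_boot all_order all_algebra.
From mathcomp Require Import reals.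
Set Implicit Arguments. Unset Strict Implicit. Unset Printing Implicit Defensive.
Import Order.TTheory GRing.Theory Num.Theory.
Local Open Scope ring_scope.

(* The isomorphism sums a 0-chain of F_k over the vertices: a k-simplex s of
   Δ[M] lies in Δ[{g}'] exactly for the vertices g of s', and these span the
   full simplex Δ[s'] of D(G,M,I), whose H_0 is the line of augmentations.
   So a 0-chain with zero augmentation over every s is the boundary of the
   1-chain coning it off from one vertex r of s', and a dual chain lifts by
   placing its value on r.  The two boundaries act on different coordinates,
   hence commute. *)

Lemma sumr_neq0P (T : finType) (V : nmodType) (P : pred T) (F : T -> V) :
  \sum_(i | P i) F i != 0 -> exists2 i, P i & F i != 0.
Proof.
case: (boolP [exists i, P i && (F i != 0)]) => [/existsP[i /andP[]]|]; first by exists i.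
move=> /existsPn noF; rewrite big1 ?eqxx // => i Pi.
by apply/eqP; move: (noF i); rewrite Pi negbK.
Qed.

Lemma sum_antisym_eq0 (R : numDomainType) (T : finType) (F : T -> T -> R) :
  (forall a b, F a b = - F b a) -> \sum_a \sum_b F a b = 0.
Proof.
move=> FN; set S := \sum_a _.
have SN : S = - S.
  rewrite {2}/S exchange_big -sumrN; apply: eq_bigr => a _.
  by rewrite -sumrN; apply: eq_bigr => b _; apply: FN.
have : S *+ 2 == 0 by rewrite mulr2n {2}SN addrN.
by rewrite mulrn_eq0 => /eqP.
Qed.

Section Orientation.
Variables (R : pzRingType) (p : nat).
Implicit Types (tau : {set 'I_p}) (a b x : 'I_p).

Lemma osign_sqr tau x : osign R tau x * osign R tau x = 1.
Proof. by rewrite -exprD addnn -mul2n exprM sqrrN expr1n expr1n. Qed.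

Lemma osign2_lt a b : (val a < val b)%N ->
  osign R [set a; b] a = 1 /\ osign R [set a; b] b = -1.
Proof.
move=> ab; rewrite /osign.
have -> : [set h in [set a; b] | (val h < val a)%N] = set0.
  apply/setP => h; rewrite !inE; apply/negbTE/andP => -[/orP[] /eqP -> ].
    by rewrite ltnn.
  by rewrite ltnNge ltnW.
have -> : [set h in [set a; b] | (val h < val b)%N] = [set a].
  apply/setP => h; rewrite !inE; case: (eqVneq h a) => [->|_]; first by rewrite ab.
  by case: (eqVneq h b) => [->|]; rewrite ?ltnn.
by rewrite cards0 cards1.
Qed.

Lemma osign2_swap a b : a != b -> osign R [set a; b] a = - osign R [set a; b] b.
Proof.
move=> ab; case: (ltngtP (val a) (val b)) => [lt|lt|eq].
- by case: (osign2_lt lt) => -> ->; rewrite opprK.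
- by rewrite setUC; case: (osign2_lt lt) => -> ->.
- by move: ab; rewrite -val_eqE eq eqxx.
Qed.

Lemma osign2_mul a b : a != b -> osign R [set a; b] a * osign R [set a; b] b = -1.
Proof. by move=> ab; rewrite osign2_swap // mulNr osign_sqr. Qed.

End Orientation.

Section DowkerGalois.
Variables (n m : nat) (I : 'I_n -> 'I_m -> bool).
Implicit Types (A : {set 'I_n}) (B : {set 'I_m}).

Lemma intent_extent_galois A B : (B \subset intent I A) = (A \subset extent I B).
Proof.
by apply/subsetP/subsetP => H x xX; rewrite inE; apply/forallP => y;
  apply/implyP => yY; have := H y yY; rewrite inE => /forallP/(_ x); rewrite xX.
Qed.

Lemma in_extent g B : (g \in extent I B) = (B \subset intent I [set g]).
Proof. by rewrite intent_extent_galois sub1set. Qed.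

End DowkerGalois.

Definition augment (R : pzRingType) (n m : nat)
  (f : {ffun {set 'I_n} * {set 'I_m} -> R}) : {ffun {set 'I_m} -> R} :=
  [ffun s => \sum_g f ([set g], s)].

Section DowkerCosheafChains.
Variables (R : pzRingType) (n m : nat) (I : 'I_n -> 'I_m -> bool).
Implicit Types (f : {ffun {set 'I_n} * {set 'I_m} -> R}) (h : {ffun {set 'I_m} -> R}).
Implicit Types (A : {set 'I_n}) (B : {set 'I_m}) (c r : 'I_n).

Lemma fibreBd_chain j k f : coshChain I j k.+1 f -> coshChain I j k (fibreBd f).
Proof.
move=> Hf [A B]; rewrite ffunE /=; case: ifP => [_|]; last by rewrite eqxx.
case/sumr_neq0P => x xB nz.
have /Hf /= [cA iA sB cB] : f (A, x |: B) != 0 by apply: contraNneq nz => ->; rewrite mulr0.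
split=> //; first exact: subset_trans (subsetUr _ _) sB.
by move: cB; rewrite cardsU1 xB => -[].
Qed.

Lemma coshChain0_vertex k f A B : coshChain I 0 k f -> f (A, B) != 0 ->
  exists2 g, A = [set g] & g \in extent I B.
Proof.
move=> Hf /Hf /= [/eqP/cards1P[g ->] _ sB _].
by exists g => //; rewrite in_extent.
Qed.

Lemma augment_lin a f1 f2 :
  augment [ffun p => a * f1 p + f2 p] = [ffun s => a * augment f1 s + augment f2 s].
Proof.
apply/ffunP => s; rewrite !ffunE; under eq_bigr do rewrite ffunE.
by rewrite big_split /= mulr_sumr.
Qed.

Lemma augment_chain k f : coshChain I 0 k f -> dualChain I k (augment f).
Proof.
move=> Hf s; rewrite ffunE => /sumr_neq0P[g _ fg].
have [_ _ _ cs] := Hf _ fg; have [g' _ g's] := coshChain0_vertex Hf fg.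
by split=> //; apply/set0Pn; exists g'.
Qed.

Lemma augment_fibreBd f : augment (fibreBd f) = simpBd (augment f).
Proof.
apply/ffunP => s; rewrite !ffunE; under eq_bigr do rewrite ffunE /=.
case: (s != set0); last by rewrite big1.
under [in RHS]eq_bigr do rewrite ffunE mulr_sumr.
by rewrite exchange_big.
Qed.

Definition apex (B : {set 'I_m}) : option 'I_n := [pick r in extent I B].

Definition liftDual h : {ffun {set 'I_n} * {set 'I_m} -> R} :=
  [ffun p => if apex p.2 is Some r then (if p.1 == [set r] then h p.2 else 0) else 0].

Lemma liftDual_chain k h : dualChain I k h -> coshChain I 0 k (liftDual h).
Proof.
move=> Hh [A B]; rewrite ffunE /apex /=; case: pickP => [r|_]; last by rewrite eqxx.
rewrite in_extent => sB; case: (eqVneq A [set r]) => [->|_]; last by rewrite eqxx.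
case/Hh => cB _; rewrite cards1; split=> //.
by apply: subset_neq0 sB _; rewrite -card_gt0 cB.
Qed.

Lemma augment_liftDual k h : dualChain I k h -> augment (liftDual h) = h.
Proof.
move=> Hh; apply/ffunP => s; rewrite ffunE; under eq_bigr do rewrite ffunE /apex /=.
case: pickP => [r _|noapex].
  rewrite (bigD1 r) //= eqxx big1 ?addr0 // => g gr.
  by rewrite (inj_eq set1_inj) (negbTE gr).
rewrite big1 //; apply/esym/eqP; apply: contraT => /Hh[_ /set0Pn[g]].
by rewrite noapex.
Qed.

(* Over s, the edge {r, c} from the apex r of s' carries f({c}, s), signed so
   that its face at c gives back f({c}, s). *)
Definition cone f : {ffun {set 'I_n} * {set 'I_m} -> R} :=
  [ffun p : {set 'I_n} * {set 'I_m} => if apex p.2 is Some r then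
     (if (r \in p.1) && (#|p.1| == 2)%N then osign R p.1 r * f (p.1 :\ r, p.2) else 0)
   else 0 : R].

Lemma cone_chain k f : coshChain I 0 k f -> coshChain I 1 k (cone f).
Proof.
move=> Hf [A B]; rewrite ffunE /apex /=; case: pickP => [r rB|_]; last by rewrite eqxx.
case: ifP => [/andP[rA /eqP cA] nz|_]; last by rewrite eqxx.
have /Hf /= [_ _ sB cB] : f (A :\ r, B) != 0 by apply: contraNneq nz => ->; rewrite mulr0.
have sBA : B \subset intent I A.
  by rewrite intent_extent_galois -(setD1K rA) subUset sub1set rB -intent_extent_galois.
by split=> //; apply: subset_neq0 sBA _; rewrite -card_gt0 cB.
Qed.

Lemma coshBd_cone_offvertex f A B : (#|A| != 1)%N -> coshBd (cone f) (A, B) = 0.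
Proof.
move=> cA; rewrite ffunE /=; case: ifP => // _; rewrite big1 // => a aA.
rewrite ffunE /=; case: (apex B) => [r|]; last by rewrite mulr0.
by rewrite cardsU1 aA add1n eqSS (negbTE cA) andbF mulr0.
Qed.

(* At the apex itself, the vanishing augmentation over B turns the sum of the
   other vertices' terms into f({r}, B). *)
Lemma coshBd_cone_vertex f c B r : apex B = Some r -> augment f B = 0 ->
  coshBd (cone f) ([set c], B) = f ([set c], B).
Proof.
move=> Er f0; rewrite ffunE /= -card_gt0 cards1 /=.
have coneE a : a != c -> cone f ([set a; c], B) =
    if r \in [set a; c] then osign R [set a; c] r * f ([set a; c] :\ r, B) else 0.
  by move=> ac; rewrite ffunE /= Er cards2 ac andbT.
case: (eqVneq c r) => [cr | cr].
  subst c; move: f0; rewrite ffunE (bigD1 r) //= => /eqP; rewrite addr_eq0 => /eqP ->.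
  rewrite -sumrN; apply: eq_big => [a|a]; first by rewrite in_set1.
  rewrite in_set1 => ar; rewrite coneE // !inE eqxx orbT mulrA osign2_mul // mulN1r.
  by rewrite setUC setU1K // in_set1 eq_sym.
rewrite (bigD1 r) /=; last by rewrite in_set1 eq_sym.
rewrite coneE 1?eq_sym // !inE eqxx /= setU1K ?in_set1 1?eq_sym //.
rewrite mulrA osign_sqr mul1r big1 ?addr0 // => a /andP[ac ar]; rewrite in_set1 in ac.
by rewrite coneE // !inE (eq_sym r) (negbTE ar) eq_sym (negbTE cr) mulr0.
Qed.

Lemma augment_eq0_coshBd k f : coshChain I 0 k f -> augment f = 0 -> f = coshBd (cone f).
Proof.
move=> Hf f0; apply/ffunP => -[A B].
have [/cards1P[c ->] | cA] := boolP (#|A| == 1)%N; last first.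
  rewrite coshBd_cone_offvertex //; apply/eqP; apply: contraT => /Hf /= [cA1 _ _ _].
  by rewrite cA1 in cA.
case Er: (apex B) => [r|].
  by rewrite (coshBd_cone_vertex c Er) // f0 ffunE.
rewrite [RHS]ffunE /= -card_gt0 cards1 big1 => [|a _]; last by rewrite ffunE /= Er mulr0.
apply/eqP; apply: contraT => /(coshChain0_vertex Hf)[g _ gB].
by move: Er; rewrite /apex; case: pickP => [//|/(_ g)]; rewrite gB.
Qed.

End DowkerCosheafChains.

Lemma fibreBd_coshBd (R : comPzRingType) (n m : nat)
  (f : {ffun {set 'I_n} * {set 'I_m} -> R}) : fibreBd (coshBd f) = coshBd (fibreBd f).
Proof.
apply/ffunP => -[A B]; rewrite !ffunE /=.
under eq_bigr do rewrite ffunE /=.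
under [in RHS]eq_bigr do rewrite ffunE /=.
case: (A != set0); case: (B != set0) => //; last 2 first.
- by rewrite big1 // => g _; rewrite mulr0.
- by rewrite big1 // => g _; rewrite mulr0.
under eq_bigr do rewrite mulr_sumr.
under [in RHS]eq_bigr do rewrite mulr_sumr.
by rewrite exchange_big; apply: eq_bigr => g _; apply: eq_bigr => x _; rewrite mulrCA.
Qed.

(* Each edge {a, c} sends its coefficient to both endpoint fibres with
   opposite orientation signs. *)
Lemma augment_coshBd (R : numDomainType) (n m : nat)
  (g : {ffun {set 'I_n} * {set 'I_m} -> R}) : augment (coshBd g) = 0.
Proof.
apply/ffunP => s; rewrite !ffunE.
under eq_bigr do rewrite ffunE /= -card_gt0 cards1 /= big_mkcond.
apply: sum_antisym_eq0 => c a; rewrite !in_set1 eq_sym.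
case: eqVneq => [_|ac]; first by rewrite oppr0.
by rewrite [[set c; a]]setUC osign2_swap 1?eq_sym //= mulNr.
Qed.

Theorem mainTheorem6 (R : realType) (n m : nat) (I : 'I_n -> 'I_m -> bool) :
  (forall k (f : {ffun {set 'I_n} * {set 'I_m} -> R}),
      coshChain I 0 k.+1 f -> coshChain I 0 k (fibreBd f)) /\
  (forall k (f : {ffun {set 'I_n} * {set 'I_m} -> R}),
      coshChain I 1 k.+1 f ->
      coshChain I 1 k (fibreBd f) /\ fibreBd (coshBd f) = coshBd (fibreBd f)) /\
  exists phi : nat -> {ffun {set 'I_n} * {set 'I_m} -> R} -> {ffun {set 'I_m} -> R},
    forall k : nat,
    [/\ (forall (a : R) (f g : {ffun {set 'I_n} * {set 'I_m} -> R}), coshChain I 0 k f -> coshChain I 0 k g ->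
           phi k [ffun p => a * f p + g p] = [ffun s => a * phi k f s + phi k g s]),
        (forall f, coshChain I 0 k f -> dualChain I k (phi k f)),
        (forall h, dualChain I k h -> exists f, coshChain I 0 k f /\ phi k f = h),
        (forall f, coshChain I 0 k f ->
           (phi k f = 0 <-> exists g, coshChain I 1 k g /\ f = coshBd g)) &
        (forall f, coshChain I 0 k.+1 f -> phi k (fibreBd f) = simpBd (phi k.+1 f))].
Proof.
split; first exact: fibreBd_chain.
split; first by move=> k f Hf; split; [apply: fibreBd_chain | apply: fibreBd_coshBd].
exists (fun _ => @augment R n m) => k; split.
- by move=> a f g _ _; apply: augment_lin.
- exact: augment_chain.
- by move=> h Hh; exists (liftDual I h); split; [apply: liftDual_chain Hh | apply: augment_liftDual Hh].
- move=> f Hf; split => [f0 | [g [_ ->]]]; last exact: augment_coshBd.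
  by exists (cone I f); split; [apply: cone_chain | apply: augment_eq0_coshBd Hf f0].
- by move=> f _; apply: augment_fibreBd.
Qed.
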